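(* For every integer $n \ge 3$, the graph $K_n \otimes K_n$ is not a circulant graph.
   Context: Graphs have no multiple edges but may have loops. The tensor product $G \otimes H$ of graphs $G$ and $H$ has vertex set $V(G)\times V(H)$, with $(g,h)$ adjacent to $(g',h')$ if and only if $g$ is adjacent to $g'$ in $G$ and $h$ is adjacent to $h'$ in $H$. For an integer $n\ge 1$ and a set $S$ of integers, the circulant graph $C_nS$ has vertex set $\{0,1,\dots,n-1\}$, with $i$ adjacent to $j$ if and only if $i-j \equiv \pm s \pmod n$ for some $s\in S$. A graph is circulant if it is isomorphic to some $C_nS$; equivalently, if its automorphism group contains a cyclic subgroup acting transitively on the vertices. $K_n$ denotes the complete graph on $n$ vertices (no loops). *)

From mathcomp Require Import all_boot all_order all_algebra.
Set Implicit Arguments. Unset Strict Implicit. Unset Printing Implicit Defensive.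
Import GRing.Theory Num.Theory.
Local Open Scope ring_scope.

(* A graph (possibly with loops, no multiple edges) on a finite vertex type
   is given by its adjacency relation; graphs here are symmetric. *)

Definition complete_graph (n : nat) : rel 'I_n := fun x y => x != y.

Definition tensor_graph (T U : finType) (G : rel T) (H : rel U) : rel (T * U) :=
  fun p q => G p.1 q.1 && H p.2 q.2.

Definition circulant_adj (N : nat) (S : int -> Prop) (i j : 'I_N) : Prop :=
  exists s : int, S s /\
    ((((i%:Z - j%:Z) == s %[mod N%:Z])%Z) || (((i%:Z - j%:Z) == - s %[mod N%:Z])%Z)).

Definition is_circulant (T : finType) (G : rel T) : Prop :=
  exists (N : nat) (S : int -> Prop) (f : 'I_N -> T),
    bijective f /\ forall i j : 'I_N, G (f i) (f j) <-> circulant_adj S i j.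
Arguments complete_graph n : clear implicits.

From mathcomp Require Import all_boot all_order all_algebra zify.
Set Implicit Arguments. Unset Strict Implicit. Unset Printing Implicit Defensive.

(* The complement of K_n (x) K_n is the rook's graph on the n x n grid, whose
   n-cliques (n >= 2) are exactly the 2n rows and columns, so every automorphism
   s permutes these lines.  For a vertex v let o1, o2 be the lengths of the
   orbits of its row and of its column; s^m fixes v for m = lcm(o1, o2).  Either
   o1 = o2 <= 2n, or the two orbits are disjoint, so o1 + o2 <= 2n and
   o1 o2 < n^2; for n >= 3 this gives 0 < m < n^2.  But a circulant graph on n^2
   vertices has the rotation as an automorphism, and no power s^m with
   0 < m < n^2 of the rotation fixes a vertex. *)

Lemma lcmn_lt_square n o1 o2 : 2 < n -> 0 < o1 -> 0 < o2 -> o1 <= n + n ->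
  (o1 != o2 -> o1 + o2 <= n + n) -> lcmn o1 o2 < n * n.
Proof.
move=> n_gt2 o1_gt0 o2_gt0 o1_le o12_le.
have [<- | /[dup] o12 /o12_le {}o12_le] := eqVneq o1 o2.
  by rewrite (lcmn_idPl (dvdnn o1)); nia.
apply: (@leq_ltn_trans (o1 * o2)).
  by rewrite dvdn_leq ?muln_gt0 ?o1_gt0 // dvdn_lcm dvdn_mulr ?dvdn_mull.
have sq := leq_mul o12_le o12_le.
case: (ltngtP o1 o2) o12 => // lt _; nia.
Qed.

Section OrbitCounting.
Variables (T : finType) (f : T -> T).
Hypothesis f_inj : injective f.

Lemma iter_dvdn_order x m : order f x %| m -> iter m f x = x.
Proof. by case/dvdnP => k ->; rewrite iterM iter_fix // iter_order. Qed.

Variable a : {pred T}.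
Hypothesis f_stable : {homo f : x / x \in a}.

Lemma fconnect_sub x : x \in a -> {subset fconnect f x <= a}.
Proof. by move=> ax y /iter_findex <-; elim: (findex f x y) => //= k; apply: f_stable. Qed.

Lemma order_le_card x : x \in a -> order f x <= #|a|.
Proof. by move=> ax; apply/subset_leq_card/subsetP/fconnect_sub. Qed.

Lemma order_add_le_card x y : x \in a -> y \in a -> order f x != order f y ->
  order f x + order f y <= #|a|.
Proof.
move=> ax ay; rewrite /order -cardUI.
case: (pickP [predI fconnect f x & fconnect f y]) => [z /andP[xz yz] | disj].
  have xy : fconnect f x y by rewrite (connect_trans xz) // fconnect_sym.
  by rewrite (eq_card (same_connect (fconnect_sym f_inj) xy)) eqxx.
rewrite (eq_card0 disj) addn0 => _; apply/subset_leq_card/subsetP => z.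
by case/orP; apply: fconnect_sub.
Qed.

End OrbitCounting.

Lemma iter_imset (aT : finType) (σ : aT -> aT) k (X : {set aT}) :
  iter k (fun Y : {set aT} => σ @: Y) X = iter k σ @: X.
Proof. by elim: k => [|k IH] /=; rewrite ?imset_id // IH -imset_comp. Qed.

Lemma clique_subset_fiber (T A B : eqType) (p : T -> A) (q : T -> B)
    (Y : {pred T}) (y1 y2 : T) :
  (forall u v, p u = p v -> q u = q v -> u = v) ->
  {in Y &, forall u v, u != v -> (p u == p v) || (q u == q v)} ->
  y1 \in Y -> y2 \in Y -> y1 != y2 -> p y1 = p y2 ->
  {in Y, forall z, p z = p y1}.
Proof.
move=> pq_inj clY y1Y y2Y y12 p12 z zY.
case: (eqVneq z y1) => [->//|zy1]; case: (eqVneq z y2) => [->//|zy2].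
case/orP: (clY _ _ zY y1Y zy1) => [/eqP//|/eqP q1].
case/orP: (clY _ _ zY y2Y zy2) => [/eqP->//|/eqP q2].
by case/eqP: y12; apply: pq_inj; rewrite // -q1.
Qed.

Lemma circulant_adj_ordS N (S : int -> Prop) (i j : 'I_N) :
  circulant_adj S (ordS i) (ordS j) <-> circulant_adj S i j.
Proof.
rewrite /circulant_adj.
suff -> : ((((ordS i)%:Z - (ordS j)%:Z) %% N%:Z = (i%:Z - j%:Z) %% N%:Z)%Z)%R by [].
by rewrite /= -!modz_nat modzDml -modzDmr modzNm modzDmr; congr (_ %% _)%Z; lia.
Qed.

Lemma val_iter_ordS N (i : 'I_N) m : val (iter m (@ordS N) i) = (i + m) %% N.
Proof.
elim: m => [|m IH] /=; first by rewrite addn0 modn_small.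
by rewrite IH -addn1 modnDml addn1 addnS.
Qed.

Lemma circulant_rotation (T : finType) (G : rel T) : is_circulant G ->
  exists σ : T -> T, [/\ injective σ, forall u v, G (σ u) (σ v) = G u v &
    forall v m, (0 < m < #|T|)%N -> iter m σ v != v].
Proof.
move=> [N [S [f [[g fg gf] Gf]]]].
have cardT : #|T| = N by rewrite -(bij_eq_card (Bijective fg gf)) card_ord.
pose σ u := f (ordS (g u)).
have iter_σ m v : iter m σ v = f (iter m (@ordS N) (g v)).
  by elim: m => //= m ->; rewrite /σ fg.
have σG u v : G (σ u) (σ v) <-> G u v.
  have := Gf (g u) (g v); rewrite !gf => Guv.
  exact: iff_trans (Gf _ _) (iff_trans (circulant_adj_ordS _ _ _) (iff_sym Guv)).
exists σ; split.
- by move=> u v /(can_inj fg) /ordS_inj /(can_inj gf).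
- by move=> u v; apply/idP/idP => /σG.
- move=> v m; rewrite cardT iter_σ => mN; apply/eqP => /(congr1 (val \o g)) /=.
  rewrite fg val_iter_ordS.
  have := ltn_ord (g v); move: (nat_of_ord (g v)) => k kN.
  case: (ltnP (k + m) N) => [lt|ge]; first by rewrite modn_small //; lia.
  by rewrite -(subnK ge) modnDr modn_small; lia.
Qed.

Section TensorSquareOfComplete.
Variable n : nat.
Local Notation T := ('I_n * 'I_n)%type.
Local Notation G := (tensor_graph (complete_graph n) (complete_graph n)).

Definition rook_adj (u v : T) := (u != v) && ~~ G u v.

Lemma rook_adjE u v : rook_adj u v = (u != v) && ((u.1 == v.1) || (u.2 == v.2)).
Proof. by rewrite /rook_adj /tensor_graph /complete_graph negb_and !negbK. Qed.

Definition row (a : 'I_n) : {set T} := setX [set a] setT.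
Definition col (b : 'I_n) : {set T} := setX setT [set b].
Definition lines : {set {set T}} := [set row a | a : 'I_n] :|: [set col b | b : 'I_n].

Lemma card_row a : #|row a| = n.
Proof. by rewrite cardsX cards1 cardsT card_ord mul1n. Qed.

Lemma card_col b : #|col b| = n.
Proof. by rewrite cardsX cards1 cardsT card_ord muln1. Qed.

Lemma card_line X : X \in lines -> #|X| = n.
Proof. by case/setUP => /imsetP[c _ ->]; rewrite ?card_row ?card_col. Qed.

Lemma card_lines : #|lines| <= n + n.
Proof.
apply: leq_trans (leq_card_setU _ _) _.
by apply: leq_add; apply: leq_trans (leq_imset_card _ _) _; rewrite card_ord.
Qed.

Lemma mem_row_col u v : u \in row v.1 -> u \in col v.2 -> u = v.
Proof. by case: u v => x y [x' y']; rewrite !inE andbT /= => /eqP-> /eqP->. Qed.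

Lemma line_rook_clique X : X \in lines -> {in X &, forall u v, u != v -> rook_adj u v}.
Proof.
case/setUP => /imsetP[c _ ->] [x y] [x' y'];
  rewrite !in_setX !in_set1 !in_setT ?andbT rook_adjE /= => /eqP-> /eqP-> ->;
  by rewrite eqxx ?orbT.
Qed.

Lemma rook_clique_line (Y : {set T}) : 1 < n -> #|Y| = n ->
  {in Y &, forall u v, u != v -> rook_adj u v} -> Y \in lines.
Proof.
move=> n_gt1 cardY clY.
have sub_line X : X \in lines -> Y \subset X -> Y \in lines.
  move=> XL YX; suff -> : Y = X by [].
  by apply/eqP; rewrite eqEcard YX (card_line XL) cardY leqnn.
have [y1 [y2 [y1Y y2Y y12]]] : exists y1 y2, [/\ y1 \in Y, y2 \in Y & y1 != y2].
  by apply/card_gt1P; rewrite cardY.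
have pq_inj (u v : T) : u.1 = v.1 -> u.2 = v.2 -> u = v by case: u v => ? ? [? ?] /= -> ->.
have := clY _ _ y1Y y2Y y12; rewrite rook_adjE y12 => /orP[/eqP e | /eqP e].
- apply: (sub_line (row y1.1)); first by apply/setUP; left; apply: imset_f.
  apply/subsetP => z zY; rewrite !inE andbT.
  apply/eqP; apply: (clique_subset_fiber pq_inj _ y1Y y2Y y12 e zY) => u v uY vY uv.
  by have := clY _ _ uY vY uv; rewrite rook_adjE uv.
- apply: (sub_line (col y1.2)); first by apply/setUP; right; apply: imset_f.
  apply/subsetP => z zY; rewrite !inE.
  have qp_inj (u v : T) : u.2 = v.2 -> u.1 = v.1 -> u = v by move=> /[swap]; apply: pq_inj.
  apply/eqP; apply: (clique_subset_fiber qp_inj _ y1Y y2Y y12 e zY) => u v uY vY uv.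
  by have := clY _ _ uY vY uv; rewrite rook_adjE uv orbC.
Qed.

Variable σ : T -> T.
Hypotheses (σ_inj : injective σ) (σ_aut : forall u v, G (σ u) (σ v) = G u v).

Lemma imset_line X : 1 < n -> X \in lines -> σ @: X \in lines.
Proof.
move=> n_gt1 XL; apply: rook_clique_line => //; first by rewrite card_imset // card_line.
move=> _ _ /imsetP[u uX ->] /imsetP[v vX ->] σuv.
have uv : u != v by apply: contraNneq σuv => ->.
by rewrite /rook_adj σ_aut (inj_eq σ_inj) -/(rook_adj u v) (line_rook_clique XL).
Qed.

Lemma automorphism_short_orbit : 2 < n ->
  forall v, exists2 m, 0 < m < n * n & iter m σ v = v.
Proof.
move=> n_gt2 v; pose π (X : {set T}) := σ @: X.
have π_inj : injective π := imset_inj σ_inj.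
have π_lines : {homo π : X / X \in lines} by move=> X; apply: imset_line; lia.
have rowL : row v.1 \in lines by apply/setUP; left; apply: imset_f.
have colL : col v.2 \in lines by apply/setUP; right; apply: imset_f.
pose m := lcmn (order π (row v.1)) (order π (col v.2)).
have fix_row : iter m π (row v.1) = row v.1 := iter_dvdn_order π_inj (dvdn_lcml _ _).
have fix_col : iter m π (col v.2) = col v.2 := iter_dvdn_order π_inj (dvdn_lcmr _ _).
exists m.
  rewrite lcmn_gt0 !order_gt0 lcmn_lt_square ?order_gt0 //.
    exact: leq_trans (order_le_card π_lines rowL) card_lines.
  by move=> o12; apply: leq_trans (order_add_le_card π_inj π_lines rowL colL o12) card_lines.
apply: mem_row_col; [rewrite -fix_row | rewrite -fix_col];
  by rewrite iter_imset imset_f // !inE eqxx.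
Qed.

End TensorSquareOfComplete.

Theorem theorem4 (n : nat) (hn : (3 <= n)%N) :
  ~ is_circulant (tensor_graph (complete_graph n) (complete_graph n)).
Proof.
case/circulant_rotation => σ [σ_inj σ_aut σ_free].
have n_gt0 : 0 < n by lia.
pose v := (Ordinal n_gt0, Ordinal n_gt0).
have [m m_lt fix_v] := automorphism_short_orbit σ_inj σ_aut hn v.
by move: (σ_free v m); rewrite card_prod !card_ord m_lt fix_v eqxx => /(_ isT).
Qed.
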